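(* Let $M$ be a model with borders, let $f:M^s\to U(n)$ be the unique p-morphism with image $M_{\wedge,\to}$, let $h:\mathcal U(M_{\wedge,\to})\to\mathcal U(M^s)$ be $h(U)=f^{-1}(U)$, and let $r:\mathcal U(M^s)\to\mathcal U(M)$ be $r(V)=\{x\in M\mid\forall y\ge x\,(y\in M^s\Rightarrow y\in V)\}$. Let $B$ be the $(\wedge,\to)$-subalgebra of $\mathcal U(M)$ generated by $v(p_1),\dots,v(p_n)$. Then $B$ equals the image of $r\circ h$. In particular, $B$ is isomorphic, as an implicative meet-semilattice, to $\mathcal U(M_{\wedge,\to})$.
   Context: Fix $n\ge1$ and variables $p_1,\dots,p_n$; $2^n=\{0,1\}^n$ with componentwise order. A model is $(M,\le,c)$, $(M,\le)$ a poset, $c:M\to 2^n$ order-preserving, with intuitionistic Kripke semantics; $v(\varphi)$ is the set of points satisfying $\varphi$. $\mathcal U(X)$ is the Heyting algebra of up-sets of a poset $X$. A p-morphism of models is an order- and colour-preserving map $f$ such that $f(x)\le y$ implies $f(x')=y$ for some $x'\ge x$. A point $x$ is a $q$-border point if $x\not\models q$ and all $y>x$ satisfy $q$; separated if it is a $q$-border point for some variable $q$. $M^s$: separated points with restricted order and colouring (all chains have at most $n$ elements). $M$ has borders if for every variable $p$ and every $x$ with $x\not\models p$ there is a $p$-border point $y\ge x$. $U(n)$ is the $n$-universal model: the generated submodel of the canonical model of IPC on $p_1,\dots,p_n$ (prime filters of the free Heyting algebra ordered by inclusion, $c(x)_i=1$ iff $p_i\in x$) consisting of points with finite up-set. For every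 model of finite depth there is a unique p-morphism into $U(n)$. $M_{\wedge,\to}$ is the image of the unique p-morphism $M^s\to U(n)$, a generated submodel of $U(n)$. *)

From mathcomp Require Import all_boot.
From Stdlib Require Import List.
Set Implicit Arguments.
Unset Strict Implicit.
Unset Printing Implicit Defensive.

Inductive form (n : nat) : Type :=
| Var : 'I_n -> form n
| Bot : form n
| And : form n -> form n -> form n
| Or  : form n -> form n -> form n
| Imp : form n -> form n -> form n.
Arguments Bot {n}.

Definition Top {n} : form n := Imp Bot Bot.

Inductive prov (n : nat) : form n -> Prop :=
| ax_K a b : prov (Imp a (Imp b a))
| ax_S a b d : prov (Imp (Imp a (Imp b d)) (Imp (Imp a b) (Imp a d)))
| ax_and1 a b : prov (Imp (And a b) a)
| ax_and2 a b : prov (Imp (And a b) b)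
| ax_andI a b : prov (Imp a (Imp b (And a b)))
| ax_or1 a b : prov (Imp a (Or a b))
| ax_or2 a b : prov (Imp b (Or a b))
| ax_orE a b d : prov (Imp (Imp a d) (Imp (Imp b d) (Imp (Or a b) d)))
| ax_efq a : prov (Imp Bot a)
| mp a b : prov (Imp a b) -> prov a -> prov b.

(** Prime filters of the free Heyting algebra (Lindenbaum algebra of IPC on
    n variables, ordered by a <= b iff |- a -> b), represented as the set of
    formulas whose classes lie in the filter. *)
Definition prime_filter n (G : form n -> Prop) : Prop :=
  [/\ G Top,
      (forall a b, G a -> G b -> G (And a b)),
      (forall a b, G a -> prov (Imp a b) -> G b),
      ~ G Bot &
      (forall a b, G (Or a b) -> G a \/ G b)].

Definition CanPt n := {G : form n -> Prop | prime_filter G}.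
Definition can_le n (x y : CanPt n) : Prop :=
  forall a, proj1_sig x a -> proj1_sig y a.
Definition finite_upset n (x : CanPt n) : Prop :=
  exists l : list (CanPt n), forall y, can_le x y -> List.In y l.

(** n-universal model U(n): points of the canonical model with finite up-set *)
Definition UPt n := {x : CanPt n | finite_upset x}.
Definition U_le n (w1 w2 : UPt n) : Prop := can_le (proj1_sig w1) (proj1_sig w2).
Definition U_col n (w : UPt n) (i : 'I_n) : Prop := proj1_sig (proj1_sig w) (Var i).

Definition upset {X : Type} (R : X -> X -> Prop) (U : X -> Prop) : Prop :=
  forall x y, R x y -> U x -> U y.
Definition meetU {X : Type} (A B : X -> Prop) : X -> Prop := fun x => A x /\ B x.
Definition impU {X : Type} (R : X -> X -> Prop) (A B : X -> Prop) : X -> Prop :=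
  fun x => forall y, R x y -> A y -> B y.

Section Kripke.
Variables (n : nat) (T : Type) (le : T -> T -> Prop) (c : T -> 'I_n -> bool).

Fixpoint sat (x : T) (a : form n) : Prop :=
  match a with
  | Var i => c x i
  | Bot => False
  | And a b => sat x a /\ sat x b
  | Or a b => sat x a \/ sat x b
  | Imp a b => forall y, le x y -> sat y a -> sat y b
  end.

Definition v (a : form n) : T -> Prop := fun x => sat x a.

Definition border (q : 'I_n) (x : T) : Prop :=
  ~ sat x (Var q) /\ (forall y, le x y -> y <> x -> sat y (Var q)).
Definition separated (x : T) : Prop := exists q, border q x.
Definition has_borders : Prop :=
  forall q x, ~ sat x (Var q) -> exists y, le x y /\ border q y.

Definition Ms := {x : T | separated x}.
Definition Ms_le (x y : Ms) : Prop := le (proj1_sig x) (proj1_sig y).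

Definition is_pmorphism (f : Ms -> UPt n) : Prop :=
  [/\ (forall x y, Ms_le x y -> U_le (f x) (f y)),
      (forall x i, c (proj1_sig x) i = true <-> U_col (f x) i) &
      (forall x w, U_le (f x) w -> exists x', Ms_le x x' /\ f x' = w)].

Inductive inB : (T -> Prop) -> Prop :=
| inB_var i : inB (v (Var i))
| inB_meet A B : inB A -> inB B -> inB (meetU A B)
| inB_imp A B : inB A -> inB B -> inB (impU le A B).

Definition r (V : Ms -> Prop) : T -> Prop :=
  fun x => forall y : Ms, le x (proj1_sig y) -> V y.

Section Image.
Variable f : Ms -> UPt n.
Definition Mimg := {w : UPt n | exists x, f x = w}.
Definition Mimg_le (w1 w2 : Mimg) : Prop := U_le (proj1_sig w1) (proj1_sig w2).
Definition fimg (x : Ms) : Mimg := exist _ (f x) (ex_intro _ x erefl).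
Definition h (U : Mimg -> Prop) : Ms -> Prop := fun x => U (fimg x).
End Image.
End Kripke.

From HB Require Import structures.
From mathcomp Require Import all_boot boolp.

(* Call a formula implicative if it is built from variables by And and Imp.  Since
   every non-separated point sees a border point for each variable it refutes, an
   implicative formula holds at x as soon as it holds at all separated points above
   x; and a p-morphism preserves implicative formulas.  Hence r (h U) = v(p) whenever
   p defines U on M_{/\,->}; moreover r o h is injective and commutes with meets
   and implications, so its image is a subalgebra containing the v(p_i).
   It remains to define every up-set of M_{/\,->} by an implicative formula.  Each
   point w of M_{/\,->} is a q-border point in U(n), and (/\ Th) -> q, where Th is
   the part of the theory of w lying in a suitable finite stock of implicative
   formulas, is refuted exactly on the down-set of w (a de Jongh formula).  The stock
   is built by induction on the number of variables false at w, which drops strictly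
   from a border point to its strict successors; an up-set U is then defined by the
   conjunction of the de Jongh formulas of the points outside U. *)

Section FormTree.
Context {n : nat}.

Fixpoint form_tree (a : form n) : GenTree.tree 'I_n :=
  match a with
  | Var i => GenTree.Leaf i
  | Bot => GenTree.Node 0 [::]
  | And a b => GenTree.Node 1 [:: form_tree a; form_tree b]
  | Or a b => GenTree.Node 2 [:: form_tree a; form_tree b]
  | Imp a b => GenTree.Node 3 [:: form_tree a; form_tree b]
  end.

Fixpoint tree_form (t : GenTree.tree 'I_n) : form n :=
  match t with
  | GenTree.Leaf i => Var i
  | GenTree.Node 1 [:: t1; t2] => And (tree_form t1) (tree_form t2)
  | GenTree.Node 2 [:: t1; t2] => Or (tree_form t1) (tree_form t2)
  | GenTree.Node 3 [:: t1; t2] => Imp (tree_form t1) (tree_form t2)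
  | _ => Bot
  end.

Lemma form_treeK : cancel form_tree tree_form.
Proof. by elim=> //= a -> b ->. Qed.

End FormTree.

HB.instance Definition _ n := Countable.copy (form n) (can_type (@form_treeK n)).

Section Derivations.
Context {n : nat}.
Implicit Types (a b d : form n) (l : seq (form n)) (A G : form n -> Prop).

Inductive deriv l : form n -> Prop :=
| deriv_hyp a : a \in l -> deriv l a
| deriv_ax a : prov a -> deriv l a
| deriv_mp a b : deriv l (Imp a b) -> deriv l a -> deriv l b.
Arguments deriv_hyp {l a}.
Arguments deriv_ax {l a}.
Arguments deriv_mp {l a b}.

Lemma prov_refl a : prov (Imp a a).
Proof. exact: mp (mp (ax_S a (Imp a a) a) (ax_K a (Imp a a))) (ax_K a a). Qed.

Lemma deriv_sub l l' a : {subset l <= l'} -> deriv l a -> deriv l' a.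
Proof.
move=> sub; elim=> {a} [a /sub|a|a b _ IHab _ IHa]; [exact: deriv_hyp|exact: deriv_ax|].
exact: deriv_mp IHab IHa.
Qed.

Lemma deduction a l b : deriv (a :: l) b -> deriv l (Imp a b).
Proof.
elim=> {b} [b|b ab|b d _ IHbd _ IHb].
- rewrite in_cons => /predU1P [->|bl]; first exact/deriv_ax/prov_refl.
  exact: deriv_mp (deriv_ax (ax_K b a)) (deriv_hyp bl).
- exact: deriv_mp (deriv_ax (ax_K b a)) (deriv_ax ab).
- exact: deriv_mp (deriv_mp (deriv_ax (ax_S a b d)) IHbd) IHb.
Qed.

Lemma deriv_nil a : deriv [::] a -> prov a.
Proof. by elim=> // b d _ Hbd _ Hb; exact: mp Hbd Hb. Qed.

Lemma prov_and_mp a b : prov (Imp (And (Imp a b) a) b).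
Proof.
apply/deriv_nil/deduction.
have hyp : deriv [:: And (Imp a b) a] (And (Imp a b) a) by apply/deriv_hyp/mem_head.
exact: deriv_mp (deriv_mp (deriv_ax (ax_and1 _ _)) hyp) (deriv_mp (deriv_ax (ax_and2 _ _)) hyp).
Qed.

Definition entails A b := exists2 l, {in l, forall x, A x} & deriv l b.

Definition extend A a : form n -> Prop := fun x => A x \/ x = a.

Lemma entails_hyp {A a} : A a -> entails A a.
Proof. by move=> Aa; exists [:: a]; [move=> x /[!inE] /eqP ->|apply/deriv_hyp/mem_head]. Qed.

Lemma entails_ax {A a} : prov a -> entails A a.
Proof. by move=> pa; exists [::] => //; apply: deriv_ax. Qed.

Lemma entails_mp {A a b} : entails A (Imp a b) -> entails A a -> entails A b.
Proof.
move=> [l1 Al1 d1] [l2 Al2 d2]; exists (l1 ++ l2).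
  by move=> x; rewrite mem_cat => /orP [/Al1|/Al2].
by apply: deriv_mp; [apply: deriv_sub d1|apply: deriv_sub d2] => x xl; rewrite mem_cat xl ?orbT.
Qed.

Lemma entails_deduction {A a b} : entails (extend A a) b -> entails A (Imp a b).
Proof.
move=> [l Al dl]; exists [seq x <- l | x != a].
  by move=> x; rewrite mem_filter => /andP [/negP xa /Al [//|/eqP]].
apply: deduction; apply: deriv_sub dl => x xl; rewrite in_cons mem_filter xl.
by case: eqP.
Qed.

Lemma entails_mono A A' a : (forall x, A x -> A' x) -> entails A a -> entails A' a.
Proof. by move=> AA' [l Al dl]; exists l => // x /Al /AA'. Qed.

Lemma entails_or A a b d :
  entails A (Or a b) -> entails (extend A a) d -> entails (extend A b) d -> entails A d.
Proof.
move=> Aab /entails_deduction Aad /entails_deduction Abd.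
exact: entails_mp (entails_mp (entails_mp (entails_ax (ax_orE a b d)) Aad) Abd) Aab.
Qed.

Lemma prime_filter_entails G a : prime_filter G -> entails G a -> G a.
Proof.
case=> Gtop Gand Gprov _ _ [l Gl]; elim=> {a} [a /Gl //|a pa|a b _ Gab _ Ga].
- by apply: Gprov Gtop _; exact: mp (ax_K a Top) pa.
- exact: Gprov (Gand _ _ Gab Ga) (prov_and_mp a b).
Qed.

Definition nth_form k : form n := odflt Bot (unpickle k).

Section Lindenbaum.
Variables (A : form n -> Prop) (b : form n).
Hypothesis A_b : ~ entails A b.

Fixpoint chain k : form n -> Prop :=
  if k is k'.+1 then
    if `[< entails (extend (chain k') (nth_form k')) b >] then chain k'
    else extend (chain k') (nth_form k')
  else A.

Definition limit x := exists k, chain k x.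

Lemma chain_mono k m x : k <= m -> chain k x -> chain m x.
Proof.
move/subnK <-; elim: (m - k) => [|d IH] Hx; first by rewrite add0n.
by rewrite addSn /=; case: asboolP => _; [exact: IH|left; exact: IH].
Qed.

Lemma chain_not_entails k : ~ entails (chain k) b.
Proof. by elim: k => [|k IH] //=; case: asboolP. Qed.

Lemma limit_stage l : {in l, forall x, limit x} -> exists k, {in l, forall x, chain k x}.
Proof.
elim: l => [|a l IH] Dl; first by exists 0.
have [k Hk] : exists k, {in l, forall x, chain k x}.
  by apply: IH => x xl; apply: Dl; rewrite in_cons xl orbT.
have [m Hm] := Dl a (mem_head a l).
exists (maxn k m) => x; rewrite in_cons => /predU1P [->|/Hk kx].
  by apply: chain_mono Hm; exact: leq_maxr.
by apply: chain_mono kx; exact: leq_maxl.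
Qed.

Lemma limit_not_entails : ~ entails limit b.
Proof.
case=> l /limit_stage [k Hk] dl; exact: chain_not_entails k (ex_intro2 _ _ l Hk dl).
Qed.

Lemma limit_maximal x : ~ limit x -> entails (extend limit x) b.
Proof.
move=> Dx; have kx : nth_form (pickle x) = x by rewrite /nth_form pickleK.
have [ext|not_ext] := EM (entails (extend (chain (pickle x)) x) b).
  by apply: entails_mono ext => y [cy|->]; [left; exists (pickle x)|right].
case: Dx; exists (pickle x).+1; rewrite /= kx.
by case: asboolP => [/not_ext []|_]; right.
Qed.

Lemma limit_closed x : entails limit x -> limit x.
Proof.
move=> Dx; apply: contrapT => nDx.
exact: limit_not_entails (entails_mp (entails_deduction (limit_maximal _ nDx)) Dx).
Qed.

Lemma limit_prime_filter : prime_filter limit.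
Proof.
split.
- exact/limit_closed/entails_ax/prov_refl.
- move=> a d Da Dd; apply: limit_closed.
  exact: entails_mp (entails_mp (entails_ax (ax_andI a d)) (entails_hyp Da)) (entails_hyp Dd).
- move=> a d Da ad; apply: limit_closed; exact: entails_mp (entails_ax ad) (entails_hyp Da).
- move=> DBot; apply: limit_not_entails.
  exact: entails_mp (entails_ax (ax_efq b)) (entails_hyp DBot).
- move=> a d Dad; apply: contrapT => /not_orP [Da Dd]; apply: limit_not_entails.
  exact: entails_or (entails_hyp Dad) (limit_maximal _ Da) (limit_maximal _ Dd).
Qed.

End Lindenbaum.

Lemma lindenbaum A b : ~ entails A b ->
  exists D, [/\ prime_filter D, forall x, A x -> D x & ~ D b].
Proof.
move=> Ab; exists (limit A b); split; first exact: limit_prime_filter.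
  by move=> x Ax; exists 0.
by move/entails_hyp; exact: limit_not_entails.
Qed.

End Derivations.

Section UniversalModel.
Context {n : nat}.
Implicit Types (a b : form n) (w u G X : UPt n).

Definition umem w a := proj1_sig (proj1_sig w) a.

Lemma umem_entails w a : entails (umem w) a -> umem w a.
Proof. exact: prime_filter_entails (proj2_sig (proj1_sig w)). Qed.

Lemma umem_prov {w a} : prov a -> umem w a.
Proof. by move=> pa; apply/umem_entails/entails_ax. Qed.

Lemma umem_mp {w a b} : umem w (Imp a b) -> umem w a -> umem w b.
Proof. by move=> wab wa; apply/umem_entails/(entails_mp (entails_hyp wab))/entails_hyp. Qed.

Lemma umem_and w a b : umem w (And a b) <-> umem w a /\ umem w b.
Proof.
split=> [wab|[wa wb]]; last by case: (proj2_sig (proj1_sig w)) => _ Gand _ _ _; exact: Gand.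
by split; apply: umem_mp wab; apply: umem_prov; [exact: ax_and1|exact: ax_and2].
Qed.

Lemma umem_or w a b : umem w (Or a b) <-> umem w a \/ umem w b.
Proof.
split=> [|[wa|wb]]; first by case: (proj2_sig (proj1_sig w)) => _ _ _ _; apply.
- exact: umem_mp (umem_prov (ax_or1 a b)) wa.
- exact: umem_mp (umem_prov (ax_or2 a b)) wb.
Qed.

Lemma umem_bot w : ~ umem w Bot.
Proof. by case: (proj2_sig (proj1_sig w)). Qed.

Lemma U_le_refl w : U_le w w.
Proof. by []. Qed.

Lemma U_le_trans {w u G} : U_le w u -> U_le u G -> U_le w G.
Proof. by move=> wu uG a /wu /uG. Qed.

(* A Lindenbaum extension of w + a avoiding b has a finite up-set, being above w. *)
Lemma umem_imp w a b : umem w (Imp a b) <-> forall G, U_le w G -> umem G a -> umem G b.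
Proof.
split=> [wab G wG Ga|wab]; first exact: umem_mp (wG _ wab) Ga.
apply: contrapT => nwab.
have [|D [Dpf wD Db]] := @lindenbaum _ (extend (umem w) a) b.
  by move/entails_deduction/umem_entails.
have D_fin : finite_upset (exist _ D Dpf).
  case: (proj2_sig w) => s ws; exists s => y Dy; apply: ws => x wx.
  by apply: Dy; apply: wD; left.
apply: Db (wab (exist _ (exist _ D Dpf) D_fin) _ _); last by apply: wD; right.
by move=> x wx; apply: wD; left.
Qed.

Lemma umem_bisim w u :
  (forall i, umem w (Var i) <-> umem u (Var i)) ->
  (forall G, U_le w G -> ~ U_le G w -> U_le u G) ->
  (forall G, U_le u G -> ~ U_le G u -> U_le w G) ->
  forall a, umem w a <-> umem u a.
Proof.
move=> wu_col wu uw; elim=> [i||a IHa b IHb|a IHa b IHb|a IHa b IHb] //.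
- by split=> /umem_bot.
- by rewrite !umem_and IHa IHb.
- by rewrite !umem_or IHa IHb.
rewrite !umem_imp; split=> ab G uG Ga.
- have [Gu|nGu] := EM (U_le G u); last exact: ab G (uw G uG nGu) Ga.
  by apply: uG; apply/IHb; apply: (ab w (U_le_refl w)); apply/IHa; exact: Gu.
- have [Gw|nGw] := EM (U_le G w); last exact: ab G (wu G uG nGw) Ga.
  by apply: uG; apply/IHb; apply: (ab u (U_le_refl u)); apply/IHa; exact: Gw.
Qed.

Definition U_border (q : 'I_n) w :=
  ~ umem w (Var q) /\ forall G, U_le w G -> ~ U_le G w -> umem G (Var q).

Lemma umem_border_imp q w a : U_border q w -> ~ umem w a -> umem w (Imp a (Var q)).
Proof. by case=> _ wq wa; apply/umem_imp => G wG Ga; apply: wq => // /(_ a Ga). Qed.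

Definition nfalse w := #|[pred i : 'I_n | ~~ `[< umem w (Var i) >]]|.

Lemma nfalse_lt w u q : (forall i, umem w (Var i) -> umem u (Var i)) ->
  ~ umem w (Var q) -> umem u (Var q) -> nfalse u < nfalse w.
Proof.
move=> wu wq uq; apply/proper_card/properP; split.
  by apply/subsetP => i; rewrite !inE; apply: contra => /asboolP /wu /asboolP.
by exists q; rewrite !inE ?negbK; apply/asboolP.
Qed.

Lemma nfalse_small w : nfalse w < n.+1.
Proof. by rewrite ltnS -[n in _ <= n]card_ord max_card. Qed.

End UniversalModel.

Inductive implicative {n} : form n -> Prop :=
| implicative_var i : implicative (Var i)
| implicative_and a b : implicative a -> implicative b -> implicative (And a b)
| implicative_imp a b : implicative a -> implicative b -> implicative (Imp a b).

(* [Var q -> Var q] plays the role of Top, which is not itself implicative. *)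
Definition bigAnd {n} (q : 'I_n) (l : seq (form n)) : form n :=
  foldr (@And n) (Imp (Var q) (Var q)) l.

Lemma implicative_bigAnd {n} (q : 'I_n) l :
  {in l, forall a, implicative a} -> implicative (bigAnd q l).
Proof.
elim: l => [|a l IH] al; first by do !constructor.
constructor; first by apply: al; rewrite mem_head.
by apply: IH => x xl; apply: al; rewrite in_cons xl orbT.
Qed.

Lemma umem_bigAnd {n} (w : UPt n) q l : umem w (bigAnd q l) <-> {in l, forall a, umem w a}.
Proof.
elim: l => [|a l IH] /=; first by split=> // _; apply/umem_prov/prov_refl.
rewrite umem_and IH; split=> [[wa wl] x|wl].
  by rewrite in_cons => /predU1P [->|/wl].
by split=> [|x xl]; apply: wl; rewrite ?mem_head // in_cons xl orbT.
Qed.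

Fixpoint sublists {T : Type} (s : seq T) : seq (seq T) :=
  if s is x :: s' then sublists s' ++ map (cons x) (sublists s') else [:: [::]].

Lemma sublists_subset {T : eqType} {s t : seq T} : t \in sublists s -> {subset t <= s}.
Proof.
elim: s t => [|x s IH] t /=; first by rewrite inE => /eqP ->.
rewrite mem_cat => /orP [/IH ts y /ts|/mapP [t' /IH t's ->] y]; first by rewrite in_cons orbC => ->.
by rewrite !in_cons => /predU1P [->|/t's ->]; rewrite ?eqxx ?orbT.
Qed.

Lemma filter_in_sublists {T : eqType} (p : pred T) s : filter p s \in sublists s.
Proof.
elim: s => [|x s IH] /=; first by rewrite mem_head.
by rewrite mem_cat; case: (p x); rewrite ?map_f ?IH ?orbT.
Qed.

Section DeJonghFormulas.
Context {n : nat}.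
Implicit Types (q : 'I_n) (L : seq (form n)).

Definition dejongh_base q L : seq (form n) :=
  let B := [seq Var i | i <- enum 'I_n] ++ L in B ++ [seq Imp a (Var q) | a <- B].

Definition dejongh_cands L : seq (form n) :=
  [seq Imp (bigAnd q s) (Var q) | q <- enum 'I_n, s <- sublists (dejongh_base q L)].

Fixpoint dejongh_formulas k : seq (form n) :=
  if k is k'.+1 then dejongh_formulas k' ++ dejongh_cands (dejongh_formulas k') else [::].

Lemma mem_dejongh_base q L a : a \in [seq Var i | i <- enum 'I_n] ++ L ->
  a \in dejongh_base q L /\ Imp a (Var q) \in dejongh_base q L.
Proof.
by move=> aB; split; rewrite mem_cat; apply/orP; [left|right; apply: map_f].
Qed.

Lemma implicative_dejongh_base q L : {in L, forall a, implicative a} ->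
  {in dejongh_base q L, forall a, implicative a}.
Proof.
have implB : {in L, forall a, implicative a} ->
    {in [seq Var i | i <- enum 'I_n] ++ L, forall a, implicative a}.
  by move=> implL a; rewrite mem_cat => /orP [/mapP [i _ ->]|/implL //]; constructor.
move=> /implB implL a; rewrite mem_cat => /orP [/implL //|/mapP [b /implL implb ->]].
by do !constructor.
Qed.

Lemma implicative_dejongh_formulas k : {in dejongh_formulas k, forall a, implicative a}.
Proof.
elim: k => [//|k IH] a /=; rewrite mem_cat => /orP [/IH //|/allpairsPdep [q [s [_ s_base ->]]]].
constructor; last constructor.
apply: implicative_bigAnd => b /(sublists_subset s_base).
exact: implicative_dejongh_base.
Qed.

Definition dejongh_theory (w : UPt n) q L : seq (form n) :=
  [seq a <- dejongh_base q L | `[< umem w a >]].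

End DeJonghFormulas.

Section DeJongh.
Context {n : nat} (P : UPt n -> Prop).
Hypothesis P_up : forall {w G}, P w -> U_le w G -> P G.
Hypothesis P_border : forall {w}, P w -> exists q, U_border q w.

Definition dejongh (p : form n) (w : UPt n) := forall u, P u -> (umem u p <-> ~ U_le u w).

Section Step.
Context {k : nat} {L : seq (form n)}.
Hypothesis L_dejongh :
  forall {u}, P u -> nfalse u < k -> exists2 p, p \in L & dejongh p u.
Context {w : UPt n} {q : 'I_n}.
Hypotheses (Pw : P w) (w_q : U_border q w) (w_k : nfalse w <= k).

(* G and w are bisimilar: a strict successor of either has fewer false variables
   than w, so its de Jongh formula lies in L and tells it apart. *)
Lemma below_of_dejongh_theory G : P G -> ~ umem G (Var q) ->
  {in dejongh_theory w q L, forall a, umem G a} -> U_le G w.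
Proof.
move=> PG Gq Gth.
have transfer a : a \in [seq Var i | i <- enum 'I_n] ++ L ->
    (umem w a -> umem G a) /\ (~ umem w a -> umem G (Imp a (Var q))).
  move/(mem_dejongh_base q) => [a_base aq_base]; split=> wa; apply: Gth.
    by rewrite mem_filter a_base andbT; apply/asboolP.
  by rewrite mem_filter aq_base andbT; apply/asboolP; exact: umem_border_imp.
have transfer_L a : a \in L ->
    (umem w a -> umem G a) /\ (~ umem w a -> umem G (Imp a (Var q))).
  by move=> aL; apply: transfer; rewrite mem_cat aL orbT.
have same_col i : umem G (Var i) <-> umem w (Var i).
  have [wG wG_q] : (umem w (Var i) -> umem G (Var i)) /\
      (~ umem w (Var i) -> umem G (Imp (Var i) (Var q))).
    by apply: transfer; rewrite mem_cat map_f ?mem_enum.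
  split=> [Gi|//]; apply: contrapT => wi; exact: Gq (umem_mp (wG_q wi) Gi).
have [r G_r] := P_border PG.
suff same_theory : forall a, umem G a <-> umem w a by move=> a /same_theory.
apply: umem_bisim => // [X GX XG|X wX Xw].
- have PX := P_up PG GX.
  have X_lt : nfalse X < k.
    apply: leq_trans w_k; apply: (nfalse_lt _ _ r) => [i /same_col /GX //||].
      by move/same_col; exact: G_r.1.
    exact: G_r.2 X GX XG.
  have [p pL p_X] := L_dejongh PX X_lt.
  apply: contrapT => /(p_X w Pw) /(transfer_L p pL).1 /GX Xp.
  exact: (p_X X PX).1 Xp (U_le_refl X).
- have PX := P_up Pw wX.
  have X_lt : nfalse X < k.
    by apply: leq_trans w_k; apply: (nfalse_lt _ _ q) (w_q.1) (w_q.2 X wX Xw) => i /wX.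
  have [p pL p_X] := L_dejongh PX X_lt.
  have wp : ~ umem w p by move/(p_X w Pw); apply.
  apply: contrapT => /(p_X G PG) Gp; exact: Gq (umem_mp ((transfer_L p pL).2 wp) Gp).
Qed.

Lemma dejongh_step : dejongh (Imp (bigAnd q (dejongh_theory w q L)) (Var q)) w.
Proof.
have w_th : {in dejongh_theory w q L, forall a, umem w a}.
  by move=> a; rewrite mem_filter => /andP [/asboolP].
move=> u Pu; rewrite umem_imp; split=> [u_imp uw|uw G uG /umem_bigAnd G_th].
  exact: w_q.1 (u_imp w uw (proj2 (umem_bigAnd _ _ _) w_th)).
apply: contrapT => Gq; apply: uw.
exact: U_le_trans uG (below_of_dejongh_theory _ (P_up Pu uG) Gq G_th).
Qed.

End Step.

Lemma dejongh_exists {k w} : P w -> nfalse w < k ->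
  exists2 p, p \in dejongh_formulas k & dejongh p w.
Proof.
elim: k w => [//|k IH] w Pw w_k; have [q w_q] := P_border Pw.
exists (Imp (bigAnd q (dejongh_theory w q (dejongh_formulas k))) (Var q)).
  by rewrite /= mem_cat (allpairs_f_dep _ (mem_enum _ q)) ?orbT ?filter_in_sublists.
exact: (dejongh_step IH Pw w_q w_k).
Qed.

Lemma upset_definable (q : 'I_n) (U : {w | P w} -> Prop) :
  upset (fun w u : {w | P w} => U_le (proj1_sig w) (proj1_sig u)) U ->
  exists2 p, implicative p & forall w, U w <-> umem (proj1_sig w) p.
Proof.
move=> U_up; pose L : seq (form n) := dejongh_formulas n.+1.
exists (bigAnd q [seq p <- L | `[< exists2 u, ~ U u & dejongh p (proj1_sig u) >]]).
  apply: implicative_bigAnd => p; rewrite mem_filter => /andP [_].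
  exact: implicative_dejongh_formulas.
move=> w; rewrite umem_bigAnd; split=> [Uw p|w_th].
  rewrite mem_filter => /andP [/asboolP [u nUu p_u] _].
  by apply/(p_u _ (proj2_sig w)) => wu; exact: nUu (U_up _ _ wu Uw).
apply: contrapT => nUw.
have [p pL p_w] := dejongh_exists (proj2_sig w) (nfalse_small (proj1_sig w)).
have wp : umem (proj1_sig w) p.
  by apply: w_th; rewrite mem_filter pL andbT; apply/asboolP; exists w.
exact: (p_w _ (proj2_sig w)).1 wp (U_le_refl _).
Qed.

End DeJongh.

Section Model.
Context {n : nat} {T : Type} {le : T -> T -> Prop} {c : T -> 'I_n -> bool}.
Hypothesis le_refl : forall x, le x x.
Hypothesis le_trans : forall x y z, le x y -> le y z -> le x z.
Hypothesis c_mono : forall x y i, le x y -> c x i -> c y i.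

Local Notation sat := (sat le c).
Local Notation Ms := (Ms le c).

Lemma sat_mono x y a : le x y -> sat x a -> sat y a.
Proof.
elim: a x y => [i||a IHa b IHb|a IHa b IHb|a IHa b IHb] x y xy //=.
- exact: c_mono.
- by case=> xa xb; split; [exact: IHa xa|exact: IHb xb].
- by case=> [xa|xb]; [left; exact: IHa xa|right; exact: IHb xb].
- by move=> xab z yz; apply: xab; exact: le_trans xy yz.
Qed.

Hypothesis borders : has_borders le c.

Lemma sat_separated p x : implicative p ->
  sat x p <-> forall s : Ms, le x (proj1_sig s) -> sat (proj1_sig s) p.
Proof.
move=> impl_p; split=> [xp s xs|]; first exact: sat_mono xs xp.
elim: impl_p x => [i|a1 b1 _ IHa _ IHb|a1 b1 _ _ _ IHb] x /= x_a.
- apply: contrapT => nxi; have [y [xy y_i]] := borders i x nxi.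
  exact: y_i.1 (x_a (exist _ y (ex_intro _ i y_i)) xy).
- by split; [apply: IHa|apply: IHb] => s /x_a [].
- move=> y xy ya; apply: IHb => s ys.
  exact: (x_a s (le_trans _ _ _ xy ys) _ (le_refl _) (sat_mono _ _ _ ys ya)).
Qed.

Variable f : Ms -> UPt n.
Hypothesis f_pmorph : is_pmorphism f.

Lemma pmorphism_mono s t : Ms_le s t -> U_le (f s) (f t).
Proof. by case: f_pmorph => mono _ _; exact: mono. Qed.

Lemma pmorphism_back s G : U_le (f s) G -> exists t, Ms_le s t /\ f t = G.
Proof. by case: f_pmorph => _ _ back; exact: back. Qed.

Lemma pmorphism_sat p s : implicative p -> sat (proj1_sig s) p <-> umem (f s) p.
Proof.
move=> impl_p; elim: impl_p s => [i|a b _ IHa _ IHb|a b _ IHa impl_b IHb] s /=.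
- by case: f_pmorph => _ col _; exact: col.
- by rewrite umem_and IHa IHb.
rewrite umem_imp; split=> [s_ab G /pmorphism_back [t [st <-]] /IHa ta|s_ab y sy ya].
  by apply/IHb; exact: s_ab _ st ta.
apply/(sat_separated _ _ impl_b) => t yt; have st := le_trans _ _ _ sy yt.
by apply/IHb; apply: s_ab (pmorphism_mono _ _ st) _; apply/IHa; exact: sat_mono yt ya.
Qed.

Let P w := exists s, f s = w.

Lemma image_up w G : P w -> U_le w G -> P G.
Proof. by move=> [s <-] /pmorphism_back [t [_ <-]]; exists t. Qed.

Lemma image_border w : P w -> exists q, U_border q w.
Proof.
move=> [s <-]; case: (proj2_sig s) => q [nsq s_q]; exists q; split.
  by case: f_pmorph => _ col _ /col.
move=> G sG Gs; have [t [st tG]] := pmorphism_back _ _ sG; subst G.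
case: f_pmorph => _ col _; apply/col; apply: s_q st _ => ts.
by apply: Gs; apply: pmorphism_mono; rewrite /Ms_le ts.
Qed.

Local Notation Mimg_le := (@Mimg_le n T le c f).

Lemma upset_meet (U1 U2 : Mimg f -> Prop) :
  upset Mimg_le U1 -> upset Mimg_le U2 -> upset Mimg_le (meetU U1 U2).
Proof. by move=> U1_up U2_up w u wu [U1w U2w]; split; [exact: U1_up U1w|exact: U2_up U2w]. Qed.

Lemma upset_imp (U1 U2 : Mimg f -> Prop) : upset Mimg_le (impU Mimg_le U1 U2).
Proof. by move=> w u wu w_imp G uG; apply: w_imp; exact: U_le_trans wu uG. Qed.

Lemma rh_definable (U : Mimg f -> Prop) p : implicative p ->
  (forall w, U w <-> umem (proj1_sig w) p) -> r (h U) = v le c p.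
Proof.
move=> impl_p Up; apply: funext => x; apply: propext.
rewrite /r /h /v (sat_separated _ _ impl_p).
by split=> xU s xs; [apply/(pmorphism_sat _ _ impl_p)/(Up (fimg f s))/xU|
  apply/(Up (fimg f s))/(pmorphism_sat _ _ impl_p)/xU].
Qed.

Lemma rh_var i : r (h (fun w : Mimg f => umem (proj1_sig w) (Var i))) = v le c (Var i).
Proof. by apply: rh_definable => //; constructor. Qed.

Lemma rh_meet (U1 U2 : Mimg f -> Prop) : r (h (meetU U1 U2)) = meetU (r (h U1)) (r (h U2)).
Proof.
apply: funext => x; apply: propext.
by split=> [x_U | [x_U1 x_U2]]; [split=> s /x_U []|split; [exact: x_U1|exact: x_U2]].
Qed.

Lemma rh_imp (U1 U2 : Mimg f -> Prop) : upset Mimg_le U1 -> upset Mimg_le U2 ->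
  r (h (impU Mimg_le U1 U2)) = impU le (r (h U1)) (r (h U2)).
Proof.
move=> U1_up U2_up; apply: funext => x; apply: propext; split.
  move=> x_imp y xy y_U1 s ys.
  exact: x_imp s (le_trans _ _ _ xy ys) _ (U_le_refl _) (y_U1 s ys).
move=> x_imp s xs w sw w_U1; have [t [st tw]] := pmorphism_back _ _ sw.
apply: (U2_up (fimg f t)); first by rewrite /Mimg_le /= tw; exact: U_le_refl.
have t_U1 : r (h U1) (proj1_sig t).
  by move=> t' tt'; apply: U1_up w_U1; rewrite /Mimg_le -tw; exact: pmorphism_mono.
exact: x_imp _ (le_trans _ _ _ xs st) t_U1 t (le_refl _).
Qed.

Lemma rh_separated (U : Mimg f -> Prop) s : upset Mimg_le U -> r (h U) (proj1_sig s) <-> U (fimg f s).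
Proof.
move=> U_up; split=> [|Us t st]; first by apply; exact: le_refl.
by apply: U_up Us; exact: pmorphism_mono.
Qed.

Lemma rh_injective (U1 U2 : Mimg f -> Prop) : upset Mimg_le U1 -> upset Mimg_le U2 ->
  r (h U1) = r (h U2) -> U1 = U2.
Proof.
move=> U1_up U2_up rhU; apply: funext => -[w [s fs]]; subst w; apply: propext.
change (U1 (fimg f s) <-> U2 (fimg f s)).
by rewrite -(rh_separated _ _ U1_up) -(rh_separated _ _ U2_up) rhU.
Qed.

Lemma inB_rh V : inB le c V -> exists U, upset Mimg_le U /\ V = r (h U).
Proof.
elim=> [i|A B _ [U1 [U1_up ->]] _ [U2 [U2_up ->]]|A B _ [U1 [U1_up ->]] _ [U2 [U2_up ->]]].
- by exists (fun w : Mimg f => umem (proj1_sig w) (Var i)); split; [move=> w u wu; apply: wu|rewrite rh_var].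
- by exists (meetU U1 U2); split; [exact: upset_meet|rewrite rh_meet].
- by exists (impU Mimg_le U1 U2); split; [exact: upset_imp|rewrite rh_imp].
Qed.

Lemma inB_implicative p : implicative p -> inB le c (v le c p).
Proof. by elim=> [i|a b _ Ia _ Ib|a b _ Ia _ Ib]; constructor. Qed.

Lemma rh_inB (q : 'I_n) (U : Mimg f -> Prop) : upset Mimg_le U -> inB le c (r (h U)).
Proof.
move=> /(upset_definable _ image_up image_border q) [p impl_p Up].
by rewrite (rh_definable _ _ impl_p Up); exact: inB_implicative.
Qed.

End Model.

Theorem theorem3p16 (n : nat) (Hn : 0 < n) (T : Type) (le : T -> T -> Prop)
  (le_refl : forall x, le x x)
  (le_trans : forall x y z, le x y -> le y z -> le x z)
  (le_anti : forall x y, le x y -> le y x -> x = y)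
  (c : T -> 'I_n -> bool)
  (c_mono : forall x y i, le x y -> c x i -> c y i)
  (HB : has_borders le c)
  (f : Ms le c -> UPt n) (Hf : is_pmorphism f) :
  (forall V : T -> Prop,
      inB le c V <-> exists U : Mimg f -> Prop, upset (@Mimg_le n T le c f) U /\ V = r (h U))
  /\
  (exists g : (Mimg f -> Prop) -> (T -> Prop),
      [/\ (forall U, upset (@Mimg_le n T le c f) U -> inB le c (g U)),
          (forall V, inB le c V -> exists U, upset (@Mimg_le n T le c f) U /\ g U = V),
          (forall U1 U2, upset (@Mimg_le n T le c f) U1 -> upset (@Mimg_le n T le c f) U2 ->
              g U1 = g U2 -> U1 = U2),
          (forall U1 U2, upset (@Mimg_le n T le c f) U1 -> upset (@Mimg_le n T le c f) U2 ->
              g (meetU U1 U2) = meetU (g U1) (g U2)) &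
          (forall U1 U2, upset (@Mimg_le n T le c f) U1 -> upset (@Mimg_le n T le c f) U2 ->
              g (impU (@Mimg_le n T le c f) U1 U2) = impU le (g U1) (g U2))]).
Proof.
have rh_inB := rh_inB le_refl le_trans c_mono HB f Hf (Ordinal Hn).
have inB_rh := inB_rh le_refl le_trans c_mono HB f Hf.
split=> [V|].
  by split=> [/inB_rh|[U [U_up ->]]]; last exact: rh_inB.
exists (fun U => r (h U)); split=> //.
- by move=> V /inB_rh [U [U_up ->]]; exists U.
- exact: rh_injective.
- by move=> U1 U2 _ _; exact: rh_meet.
- exact: rh_imp.
Qed.
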